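(* Let $G=(V,E)$ be a finite graph satisfying the $CD\psi(n,-K)$ condition for some $n>0$, $K>0$, where $\psi:(0,+\infty)\to\mathbb R$ is a concave $C^1$ function with $\psi>0$ and $\psi'>0$ (and $\psi(1)D_w$ in the image of $\psi$). Let $u$ be a positive solution of the heat equation $\partial_t u=\Delta u$ on $V$. Then for all vertices and all $t>0$, $$\Gamma^{\psi}(u)-\psi'(1)\frac{\partial_{t}u}{u}\leq \frac{n}{2t}+\sqrt{nKC},\qquad C=D_{\mu}\left[\psi'(1)\left(\psi^{-1}(\psi(1)D_{w})-1\right)+\psi(1)\right].$$
   Context: Graphs: $G=(V,E)$ is a connected, locally finite graph; each edge $xy$ carries a weight $w_{xy}>0$ (possibly asymmetric), and $\mu:V\to(0,\infty)$ is a vertex measure; $y\sim x$ means $xy\in E$, $\deg(x)=\sum_{y\sim x}w_{xy}<\infty$, $D_\mu=\sup_{x}\deg(x)/\mu(x)$, $D_w=\sup_{x\sim y}\deg(x)/w_{xy}$. Laplacian: $\Delta f(x)=\frac{1}{\mu(x)}\sum_{y\sim x}w_{xy}(f(y)-f(x))$. For $\psi:(0,\infty)\to\mathbb R$ and $f:V\to(0,\infty)$: $\Delta^\psi f(x)=\Delta\big[\psi\big(\tfrac{f}{f(x)}\big)\big](x)$; for $C^1$ $\psi$, $\overline\psi(s)=\psi'(1)(s-1)-(\psi(s)-\psi(1))$ and $\Gamma^\psi f=\Delta^{\overline\psi}f$; $(\Omega^\psi f)(x)=\Delta\big[\psi'\big(\tfrac{f}{f(x)}\big)\tfrac{f}{f(x)}\big(\tfrac{\Delta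 f}{f}-\tfrac{\Delta f(x)}{f(x)}\big)\big](x)$; $2\Gamma_2^\psi(f)=\Omega^\psi f+\frac{\Delta f\,\Delta^\psi f}{f}-\frac{\Delta(f\Delta^\psi f)}{f}$. The graph satisfies $CD\psi(n,K)$ if for every $f:V\to(0,\infty)$ and every vertex, $\Gamma_2^\psi(f)\ge\frac1n(\Delta^\psi f)^2+K\Gamma^\psi(f)$. $\psi^{-1}$ is the inverse function of $\psi$. A positive solution of the heat equation on $U\subset V$ is $u:V\times[0,\infty)\to(0,\infty)$, continuously differentiable in $t$, with $\partial_t u=\Delta u$ at every $x\in U$, $t\ge0$; operators are applied to $u(\cdot,t)$ at each fixed time. *)

From HB Require Import structures.
From mathcomp Require Import all_boot all_order all_algebra.
From mathcomp Require Import all_classical all_reals all_analysis.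
Set Implicit Arguments. Unset Strict Implicit. Unset Printing Implicit Defensive.
Import Order.TTheory GRing.Theory Num.Theory.
Import numFieldNormedType.Exports.
Local Open Scope classical_set_scope.
Local Open Scope ring_scope.

Section GraphOps.
Variables (R : realType) (V : finType) (adj : rel V) (w : V -> V -> R) (mu : V -> R).

Definition deg (x : V) : R := \sum_(y | adj x y) w x y.

Definition lap (f : V -> R) (x : V) : R :=
  (mu x)^-1 * \sum_(y | adj x y) w x y * (f y - f x).

Definition lap_psi (psi : R -> R) (f : V -> R) (x : V) : R :=
  lap (fun y => psi (f y / f x)) x.

Definition psibar (psi : R -> R) (s : R) : R :=
  derive1 psi 1 * (s - 1) - (psi s - psi 1).

Definition Gamma_psi (psi : R -> R) (f : V -> R) (x : V) : R :=
  lap_psi (psibar psi) f x.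

Definition Omega_psi (psi : R -> R) (f : V -> R) (x : V) : R :=
  lap (fun y => derive1 psi (f y / f x) * (f y / f x)
                * (lap f y / f y - lap f x / f x)) x.

Definition Gamma2_psi (psi : R -> R) (f : V -> R) (x : V) : R :=
  (Omega_psi psi f x + lap f x * lap_psi psi f x / f x
   - lap (fun y => f y * lap_psi psi f y) x / f x) / 2.

Definition CD_psi (psi : R -> R) (n K : R) : Prop :=
  forall f : V -> R, (forall y, 0 < f y) ->
  forall x, n^-1 * (lap_psi psi f x) ^+ 2 + K * Gamma_psi psi f x
            <= Gamma2_psi psi f x.

(* D_mu = sup_x deg(x)/mu(x) (a max over the finite vertex set; all terms > 0) *)
Definition D_mu : R := \big[Num.max/0]_(x : V) (deg x / mu x).

(* D_w = sup_{x ~ y} deg(x)/w_xy (all terms > 0; 0 if there are no edges) *)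
Definition D_w : R :=
  \big[Num.max/0]_(x : V) \big[Num.max/0]_(y | adj x y) (deg x / w x y).

(* finite connected simple graph with positive (possibly asymmetric)
   edge weights and positive vertex measure *)
Definition weighted_graph : Prop :=
  [/\ symmetric adj, irreflexive adj, (forall x y, connect adj x y),
      (forall x y, adj x y -> 0 < w x y) & (forall x, 0 < mu x)].

Definition heat_solution (u : V -> R -> R) : Prop :=
  [/\ (forall x t, 0 <= t -> 0 < u x t),
      (forall x, {within `[0, +oo[, continuous (u x)}),
      (forall x t, 0 < t -> derivable (u x) t 1),
      (forall x t, 0 < t -> {for t, continuous (derive1 (u x))}) &
      (forall x t, 0 < t -> derive1 (u x) t = lap (fun y => u y t) x)].

End GraphOps.

Definition psi_admissible (R : realType) (psi : R -> R) : Prop :=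
  [/\ (forall x, 0 < x -> derivable psi x 1),
      (forall x, 0 < x -> {for x, continuous (derive1 psi)}),
      (forall x, 0 < x -> 0 < psi x),
      (forall x, 0 < x -> 0 < derive1 psi x) &
      (forall x y a, 0 < x -> 0 < y -> 0 <= a <= 1 ->
         a * psi x + (1 - a) * psi y <= psi (a * x + (1 - a) * y))].

From Pilot Require Import Defs.
From HB Require Import structures.
From mathcomp Require Import all_boot all_order all_algebra.
From mathcomp Require Import all_classical all_reals all_analysis.
From mathcomp Require Import ring lra.
Import Order.TTheory GRing.Theory Num.Theory.
Import numFieldNormedType.Exports.
Local Open Scope classical_set_scope.
Local Open Scope ring_scope.
Set Implicit Arguments. Unset Strict Implicit. Unset Printing Implicit Defensive.

(** Li-Yau maximum principle. Put [a = sqrt (n K C)] and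
    [g = u (t Delta^psi u + n/2 + a t)]. At a negative minimum [(x1, t1)] of [g]
    on [V x [0, T]] one has [t1 > 0], [d_t g <= 0] and [Delta g >= 0], whereas
    [(d_t - Delta) g = u (Delta^psi u + a + 2 t Gamma_2^psi u)]. The curvature
    condition bounds [Gamma_2^psi u] below by [(Delta^psi u)^2 / n - K Gamma^psi u],
    and [Delta^psi u < 0] forces every ratio [u y / u x1] below
    [s = psi^-1 (psi 1 D_w)], whence [Gamma^psi u <= C]; the resulting quadratic
    inequality in [t Delta^psi u] contradicts [g < 0]. Finally
    [Gamma^psi u - psi'(1) d_t u / u = - Delta^psi u], so [g >= 0] is the claim. *)

Section RealDerivatives.
Variable R : realType.

Lemma is_derive_bigsum (I : Type) (r : seq I) (P : pred I) (h : I -> R -> R)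
    (dh : I -> R) (x : R) :
  (forall i, P i -> is_derive x 1 (h i) (dh i)) ->
  is_derive x 1 (fun t => \sum_(i <- r | P i) h i t) (\sum_(i <- r | P i) dh i).
Proof.
move=> hd; rewrite -fct_sumE.
elim/big_ind2: _ => // [|f df g dg *]; first exact: is_derive_cst.
exact: is_deriveD.
Qed.

Lemma is_derive_div (f g : R -> R) (x df dg : R) :
  g x != 0 -> is_derive x 1 f df -> is_derive x 1 g dg ->
  is_derive x 1 (fun t => f t / g t) (df / g x - f x * dg / g x ^+ 2).
Proof.
move=> gx0 fd gd; have -> : (fun t => f t / g t) = f * (fun t => (g t)^-1) by [].
have fgd := is_deriveM fd (is_deriveV gx0 gd).
by apply: (is_derive_eq fgd); rewrite /GRing.scale /=; field.
Qed.

Lemma derive1_le0_at_right_min (f : R -> R) (a c : R) :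
  a < c -> derivable f c 1 -> (forall t, a < t < c -> f c <= f t) ->
  derive1 f c <= 0.
Proof.
move=> ac fd cmin; rewrite derive1E ['D_1 f c]cvg_at_leftE //.
apply: limr_le.
  rewrite -(cvg_at_leftE (fun h => h^-1 *: ((f \o shift c) _ - f c))) //.
  apply: cvg_trans fd; apply: cvg_app.
  move=> A [e e0 Ae]; exists e => // y ye y0; apply: Ae => //.
  exact/ltr0_neq0.
near=> h; apply: mulr_le0_ge0.
  by rewrite invr_le0; apply: ltW; near: h; exists 1 => /=.
rewrite subr_ge0 [_%:A]mulr1; apply: cmin; near: h.
exists (c - a); first by rewrite /= subr_gt0.
move=> h; rewrite /= distrC subr0 => /ltr_normlP[].
by rewrite ltrBrDl ltrBlDl => -> _ h0; rewrite gtrDr.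
Unshelve. all: by end_near. Qed.

Lemma gtr0_derive1_lt_pos (f : R -> R) (x y : R) :
  (forall z, 0 < z -> derivable f z 1) -> (forall z, 0 < z -> 0 < derive1 f z) ->
  0 < x -> x < y -> f x < f y.
Proof.
move=> fd f'0 x0 xy; have pos z : z \in `]x, y[ -> 0 < z.
  by rewrite in_itv /= => /andP[/(lt_trans x0)].
apply: (@gtr0_derive1_lt_cc _ f x y) => //; last 2 first.
- by rewrite in_itv /= lexx ltW.
- by rewrite in_itv /= lexx ltW.
- by move=> z /pos; exact: fd.
- by move=> z /pos; exact: f'0.
apply: derivable_within_continuous => z; rewrite in_itv /= => /andP[xz _].
by apply: fd; exact: lt_le_trans xz.
Qed.

End RealDerivatives.

Lemma li_yau_quadratic (R : realFieldType) (n t a L : R) :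
  0 < n -> 0 < t -> 0 <= a -> t * L + n / 2 + a * t < 0 ->
  0 < L + a + 2 * t * L ^+ 2 / n - 2 * t * a ^+ 2 / n.
Proof.
move=> n0 t0 a0 neg; have at0 : 0 <= a * t by rewrite mulr_ge0 // ltW.
have -> : L + a + 2 * t * L ^+ 2 / n - 2 * t * a ^+ 2 / n =
    (- (t * L) - a * t) * (- 2 * (t * L) + 2 * (a * t) - n) / (n * t).
  by field; rewrite !gt_eqF.
by apply: divr_gt0; [apply: mulr_gt0; lra | exact: mulr_gt0].
Qed.

Section Laplacian.
Variables (R : realType) (V : finType) (adj : rel V) (w : V -> V -> R) (mu : V -> R).
Hypothesis w_pos : forall x y, adj x y -> 0 < w x y.
Hypothesis mu_pos : forall x, 0 < mu x.

Local Notation lap := (lap adj w mu).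
Local Notation lap_psi := (lap_psi adj w mu).
Local Notation Gamma_psi := (Gamma_psi adj w mu).
Local Notation D_w := (D_w adj w).
Local Notation D_mu := (D_mu adj w mu).

Lemma lapD_scale (a b : R) (f g : V -> R) (x : V) :
  lap (fun y => a * f y + b * g y) x = a * lap f x + b * lap g x.
Proof.
rewrite /Defs.lap !mulr_sumr -big_split; apply: eq_bigr => y _ /=; ring.
Qed.

Lemma lap_ge0_at_min (f : V -> R) (x : V) :
  (forall y, adj x y -> f x <= f y) -> 0 <= lap f x.
Proof.
move=> fmin; apply: mulr_ge0; first by rewrite invr_ge0 ltW.
by apply: sumr_ge0 => y xy; rewrite mulr_ge0 ?subr_ge0 ?fmin // ltW ?w_pos.
Qed.

Lemma Gamma_psi_lap (psi : R -> R) (f : V -> R) (x : V) : f x != 0 ->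
  Gamma_psi psi f x = derive1 psi 1 * (lap f x / f x) - lap_psi psi f x.
Proof.
move=> fx0; rewrite /Defs.Gamma_psi /Defs.lap_psi /Defs.lap /psibar divff //.
rewrite !subrr mulr0.
transitivity ((mu x)^-1 * (derive1 psi 1 / f x * \sum_(y | adj x y) w x y * (f y - f x)
    - \sum_(y | adj x y) w x y * (psi (f y / f x) - psi 1))); last by ring.
congr (_ * _); rewrite mulr_sumr -sumrB.
by apply: eq_bigr => y _; field.
Qed.

Lemma le_deg_D_w (x y : V) : adj x y -> deg adj w x / w x y <= D_w.
Proof.
move=> xy; apply: le_trans (le_bigmax _ _ x).
exact: (le_bigmax_cond _ (fun y => deg adj w x / w x y) xy).
Qed.

Lemma le_deg_D_mu (x : V) : deg adj w x / mu x <= D_mu.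
Proof. exact: (le_bigmax _ (fun x => deg adj w x / mu x) x). Qed.

Lemma le_w_deg (x y : V) : adj x y -> w x y <= deg adj w x.
Proof.
move=> xy; rewrite /deg (bigD1 y) //= lerDl.
by apply: sumr_ge0 => z /andP[xz _]; exact/ltW/w_pos.
Qed.

(* Without edges the maximum defining D_w is its default value 0. *)
Lemma D_w_ge1 : 0 < D_w -> 1 <= D_w.
Proof.
case: (pselect (exists x y, adj x y)) => [[x [y xy]] _ | noedge].
  apply: le_trans (le_deg_D_w xy).
  by rewrite ler_pdivlMr ?mul1r ?le_w_deg ?w_pos.
suff -> : D_w = 0 by rewrite ltxx.
rewrite /Defs.D_w; elim/big_ind: _ => // [? ? -> ->|x _]; first by rewrite maxxx.
elim/big_ind: _ => // [? ? -> ->|y xy]; first by rewrite maxxx.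
by case: noedge; exists x, y.
Qed.

Section Psi.
Variables (psi : R -> R) (s : R).
Hypothesis psi_d : forall x, 0 < x -> derivable psi x 1.
Hypothesis psi_pos : forall x, 0 < x -> 0 < psi x.
Hypothesis dpsi_pos : forall x, 0 < x -> 0 < derive1 psi x.
Hypothesis s_pos : 0 < s.
Hypothesis psi_s : psi s = psi 1 * D_w.

Lemma psi_le_inj (x y : R) : 0 < y -> psi x <= psi y -> x <= y.
Proof.
move=> y0 le_psi; rewrite leNgt; apply/negP.
by move=> /(gtr0_derive1_lt_pos psi_d dpsi_pos y0); rewrite ltNge le_psi.
Qed.

Lemma s_ge1 : 1 <= s.
Proof.
have psi1 := psi_pos ltr01.
apply: psi_le_inj => //; rewrite psi_s ler_peMr ?(ltW psi1) //.
by apply: D_w_ge1; rewrite -(pmulr_rgt0 _ (psi_pos ltr01)) -psi_s psi_pos.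
Qed.

Lemma li_yau_const_ge0 : 0 <= derive1 psi 1 * (s - 1) + psi 1.
Proof. by rewrite addr_ge0 ?mulr_ge0 ?subr_ge0 ?s_ge1 ?ltW ?dpsi_pos ?psi_pos. Qed.

Section Ratio.
Variables (f : V -> R) (x : V).
Hypothesis f_pos : forall y, 0 < f y.
Hypothesis lap_psi_le0 : lap_psi psi f x <= 0.

Lemma ratio_le_of_lap_psi_le0 (y : V) : adj x y -> f y / f x <= s.
Proof.
move=> xy; apply: psi_le_inj => //; have psi1 := psi_pos ltr01.
have sum_le : \sum_(z | adj x z) w x z * psi (f z / f x) <= deg adj w x * psi 1.
  move: lap_psi_le0; rewrite /Defs.lap_psi /Defs.lap divff ?gt_eqF //.
  rewrite pmulr_rle0 ?invr_gt0 // /deg mulr_suml.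
  by under eq_bigr do rewrite mulrBr; rewrite sumrB subr_le0.
have term_le : w x y * psi (f y / f x) <= deg adj w x * psi 1.
  apply: le_trans sum_le; rewrite (bigD1 y) //= lerDl.
  apply: sumr_ge0 => z /andP[xz _].
  by rewrite mulr_ge0 ?ltW ?w_pos ?psi_pos ?divr_gt0.
rewrite psi_s -(ler_pM2l (w_pos xy)); apply: le_trans term_le _.
rewrite mulrCA mulrC ler_pM2l // -ler_pdivrMl ?w_pos // mulrC.
exact: le_deg_D_w.
Qed.

Lemma Gamma_psi_le_of_lap_psi_le0 :
  Gamma_psi psi f x <= D_mu * (derive1 psi 1 * (s - 1) + psi 1).
Proof.
set c := derive1 psi 1 * (s - 1) + psi 1.
rewrite /Defs.Gamma_psi /Defs.lap_psi /Defs.lap /psibar divff ?gt_eqF //.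
rewrite !subrr mulr0 subr0.
apply: (@le_trans _ _ ((mu x)^-1 * (deg adj w x * c))).
  rewrite ler_pM2l ?invr_gt0 // /deg mulr_suml; apply: ler_sum => y xy.
  rewrite subr0 ler_pM2l ?w_pos //.
  have r_pos : 0 < psi (f y / f x) by rewrite psi_pos ?divr_gt0.
  have : derive1 psi 1 * (f y / f x - 1) <= derive1 psi 1 * (s - 1).
    by rewrite ler_pM2l ?dpsi_pos // lerD2r ratio_le_of_lap_psi_le0.
  rewrite /c; lra.
rewrite mulrA [_ * deg _ _ _]mulrC ler_wpM2r ?li_yau_const_ge0 //.
exact: le_deg_D_mu.
Qed.

End Ratio.
End Psi.
End Laplacian.

Section HeatFlow.
Variables (R : realType) (V : finType) (adj : rel V) (w : V -> V -> R) (mu : V -> R)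
  (psi : R -> R) (u : V -> R -> R).
Local Unset Implicit Arguments.
Hypothesis psi_d : forall x, 0 < x -> derivable psi x 1.
Hypothesis u_pos : forall x t, 0 <= t -> 0 < u x t.
Hypothesis u_cont : forall x, {within `[0, +oo[, continuous (u x)}.
Hypothesis u_d : forall x t, 0 < t -> derivable (u x) t 1.
Hypothesis u_heat : forall x t, 0 < t -> derive1 (u x) t = lap adj w mu (fun y => u y t) x.

Local Notation lap := (lap adj w mu).

Definition lap_psi_heat (x : V) (t : R) : R := lap_psi adj w mu psi (fun y => u y t) x.

Lemma u_neq0 (x : V) (t : R) : 0 <= t -> u x t != 0.
Proof. by move=> t0; rewrite gt_eqF ?u_pos. Qed.

Lemma is_derive_psi_ratio (y x : V) (t : R) : 0 < t ->
  is_derive t 1 (fun r => psi (u y r / u x r))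
    (derive1 psi (u y t / u x t) *
      (derive1 (u y) t / u x t - u y t * derive1 (u x) t / u x t ^+ 2)).
Proof.
move=> t0; have t0' := ltW t0.
have ratio_d := is_derive_div (u_neq0 x t t0')
  (derivableP (u_d y t t0)) (derivableP (u_d x t t0)).
have psi_rd := derivableP (psi_d _ (divr_gt0 (u_pos y t t0') (u_pos x t t0'))).
have comp_d := is_derive1_comp (g := fun r => u y r / u x r) psi_rd ratio_d.
by apply: is_derive_eq comp_d _; rewrite !derive1E.
Qed.

Lemma is_derive_lap_psi_heat (x : V) (t : R) : 0 < t ->
  is_derive t 1 (lap_psi_heat x) (Omega_psi adj w mu psi (fun y => u y t) x).
Proof.
move=> t0; have t0' := ltW t0.
have sum_d := @is_derive_bigsum R V (index_enum V) (adj x) _ _ t (fun y _ =>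
  is_deriveZ (w x y) (is_deriveB (is_derive_psi_ratio y x t t0) (is_derive_psi_ratio x x t t0))).
apply: is_derive_eq (is_deriveZ (mu x)^-1 sum_d) _.
rewrite /Omega_psi {1}/Defs.lap /GRing.scale /=; congr (_ * _); apply: eq_bigr => y _.
rewrite /GRing.scale /= !u_heat // divff ?u_neq0 // subrr mulr0 subr0.
by congr (_ * _); field; rewrite !u_neq0.
Qed.

Definition li_yau_fun (c a : R) (x : V) (t : R) : R :=
  u x t * (t * lap_psi_heat x t + c + a * t).

Section LiYauFun.
Variables (c a : R).
Local Notation g := (li_yau_fun c a).

Lemma is_derive_li_yau_fun (x : V) (t : R) : 0 < t ->
  is_derive t 1 (g x) (derive1 (u x) t * (t * lap_psi_heat x t + c + a * t)
    + u x t * (lap_psi_heat x t + t * Omega_psi adj w mu psi (fun y => u y t) x + a)).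
Proof.
move=> t0; have ud := derivableP (u_d x t t0).
have Ld := is_derive_lap_psi_heat x t t0.
have gd := is_deriveM ud (is_deriveD (is_deriveD (is_deriveM (is_derive_id t 1) Ld)
  (is_derive_cst c t 1)) (is_deriveZ a (is_derive_id t 1))).
apply: is_derive_eq gd _; rewrite /GRing.scale /= !derive1E.
have -> : (id * lap_psi_heat x + cst c + a \*: id) t = t * lap_psi_heat x t + c + a * t by [].
ring.
Qed.

Lemma heat_operator_li_yau_fun (x : V) (t : R) : 0 < t ->
  derive1 (g x) t - lap (fun y => g y t) x =
  u x t * (lap_psi_heat x t + a + 2 * t * Gamma2_psi adj w mu psi (fun y => u y t) x).
Proof.
move=> t0; have gd := is_derive_li_yau_fun x t t0; rewrite derive1E derive_val.
have -> : (fun y => g y t) =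
    (fun y => t * (u y t * lap_psi_heat y t) + (c + a * t) * u y t).
  by apply/funext => y; rewrite /li_yau_fun; ring.
rewrite lapD_scale /Gamma2_psi u_heat //.
by rewrite /lap_psi_heat; field; rewrite u_neq0 ?ltW.
Qed.

Lemma li_yau_fun_continuous_pos (x : V) (t : R) : 0 < t -> {for t, continuous (g x)}.
Proof.
move=> t0; apply: differentiable_continuous; rewrite -derivable1_diffP.
by case: (is_derive_li_yau_fun x t t0).
Qed.

Lemma li_yau_fun_cvg_right0 (x : V) : g x t @[t --> 0^'+] --> g x 0.
Proof.
have id0 : t @[t --> (0 : R)^'+] --> (0 : R) by apply: cvg_at_right_filter; exact: cvg_id.
have u0 y : u y t @[t --> 0^'+] --> u y 0.
  have : {within `[0, 1], continuous (u y)}.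
    by apply: continuous_subspaceW (u_cont y) => r /=; rewrite !in_itv /= => /andP[->].
  by case/(continuous_within_itvP _ ltr01).
have L0 : lap_psi_heat x t @[t --> 0^'+] --> lap_psi_heat x 0.
  apply: cvgM; first exact: cvg_cst.
  apply: cvg_big => [|y _]; first exact: add_continuous.
  apply: cvgM; first exact: cvg_cst.
  have ux0 := u_neq0 x 0 (lexx 0).
  have ratio0 z : psi (u z t / u x t) @[t --> 0^'+] --> psi (u z 0 / u x 0).
    apply: continuous_cvg; last by apply: cvgM; [exact: u0 | exact: cvgV].
    apply: differentiable_continuous; rewrite -derivable1_diffP.
    by apply: psi_d; rewrite divr_gt0 ?u_pos.
  exact: cvgB.
apply: cvgM; first exact: u0.
apply: cvgD; last exact: cvgM (cvg_cst a) id0.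
by apply: cvgD; [exact: cvgM id0 L0 | exact: cvg_cst].
Qed.

Lemma li_yau_fun_continuous (x : V) (T : R) : 0 < T -> {within `[0, T], continuous (g x)}.
Proof.
move=> T0; apply/continuous_within_itvP => //; split.
- by move=> t; rewrite in_itv /= => /andP[t0 _]; exact: li_yau_fun_continuous_pos.
- exact: li_yau_fun_cvg_right0.
- by apply: cvg_at_left_filter; exact: li_yau_fun_continuous_pos.
Qed.

Lemma li_yau_fun_min (x0 : V) (T : R) : 0 < T ->
  exists x1, exists2 t1, t1 \in `[0, T] & forall x t, t \in `[0, T] -> g x1 t1 <= g x t.
Proof.
move=> T0; have tmin_ex x : exists t1,
    t1 \in `[0, T] /\ forall t, t \in `[0, T] -> g x t1 <= g x t.
  by have [t1 ? ?] := EVT_min (ltW T0) (li_yau_fun_continuous x T T0); exists t1.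
have [tmin tminP] := boolp.choice tmin_ex.
have [x1 _ x1min] := @arg_minP _ _ V x0 xpredT (fun x => g x (tmin x)) erefl.
exists x1, (tmin x1); first exact: (tminP x1).1.
by move=> x t tT; apply: le_trans (x1min x erefl) ((tminP x).2 t tT).
Qed.

End LiYauFun.

Section LiYau.
Variables (n K s : R).
Hypothesis w_pos : forall x y, adj x y -> 0 < w x y.
Hypothesis mu_pos : forall x, 0 < mu x.
Hypothesis psi_pos : forall x, 0 < x -> 0 < psi x.
Hypothesis dpsi_pos : forall x, 0 < x -> 0 < derive1 psi x.
Hypothesis n_pos : 0 < n.
Hypothesis K_pos : 0 < K.
Hypothesis s_pos : 0 < s.
Hypothesis psi_s : psi s = psi 1 * D_w adj w.
Hypothesis CD : CD_psi adj w mu psi n (- K).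

Local Notation C := (D_mu adj w mu * (derive1 psi 1 * (s - 1) + psi 1)).
Local Notation a := (Num.sqrt (n * K * C)).
Local Notation g := (li_yau_fun (n / 2) a).

Lemma li_yau_fun_min_ge0 (x1 : V) (t1 T : R) : 0 < t1 -> t1 <= T ->
  (forall x t, t \in `[0, T] -> g x1 t1 <= g x t) -> 0 <= g x1 t1.
Proof.
move=> t1_pos t1_le gmin; have t1_ge0 := ltW t1_pos.
rewrite leNgt; apply/negP => g_neg.
set L := lap_psi_heat x1 t1.
set G := Gamma_psi adj w mu psi (fun y => u y t1) x1.
set G2 := Gamma2_psi adj w mu psi (fun y => u y t1) x1.
have U_pos := u_pos x1 t1 t1_ge0.
have a_ge0 : 0 <= a := sqrtr_ge0 _.
have C_ge0 : 0 <= C.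
  by apply: mulr_ge0; [exact: bigmax_ge_id | exact: (li_yau_const_ge0 w_pos psi_d)].
have a2 : a ^+ 2 / n = K * C.
  rewrite sqr_sqrtr; last by apply: mulr_ge0 => //; apply: mulr_ge0; exact: ltW.
  by rewrite -mulrA mulrC mulKf ?gt_eqF.
have bracket_neg : t1 * L + n / 2 + a * t1 < 0.
  by move: g_neg; rewrite /li_yau_fun pmulr_rlt0.
have L_neg : L < 0.
  have at1 : 0 <= a * t1 by rewrite mulr_ge0.
  rewrite -(pmulr_rlt0 _ t1_pos).
  have n2 : 0 < n / 2 by rewrite divr_gt0.
  lra.
have t1T : t1 \in `[0, T] by rewrite in_itv /= t1_ge0.
have dg_le0 : derive1 (g x1) t1 <= 0.
  apply: (derive1_le0_at_right_min t1_pos).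
    by case: (is_derive_li_yau_fun (n / 2) a x1 t1 t1_pos).
  move=> t /andP[t_pos t_lt]; apply: gmin.
  by rewrite in_itv /= ltW ?(le_trans (ltW t_lt)).
have lapg_ge0 : 0 <= lap (fun y => g y t1) x1.
  by apply: (lap_ge0_at_min w_pos mu_pos) => y _; apply: gmin.
have heat_le0 : L + a + 2 * t1 * G2 <= 0.
  rewrite -(pmulr_rle0 _ U_pos) -(heat_operator_li_yau_fun (n / 2) a x1 t1 t1_pos).
  lra.
have G_le : G <= C.
  apply: Gamma_psi_le_of_lap_psi_le0 => //; first by move=> y; exact: u_pos.
  exact: ltW.
have G2_ge : L ^+ 2 / n - a ^+ 2 / n <= G2.
  have := CD (fun y => u y t1) (fun y => u_pos y t1 t1_ge0) x1.
  rewrite -/G -/G2 -/(lap_psi_heat x1 t1) -/L a2 mulrC => CD1.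
  have : K * G <= K * C by rewrite ler_pM2l.
  lra.
have := li_yau_quadratic n_pos t1_pos a_ge0 bracket_neg.
have : 2 * t1 * (L ^+ 2 / n - a ^+ 2 / n) <= 2 * t1 * G2 by rewrite ler_pM2l ?mulr_gt0.
lra.
Qed.

Lemma li_yau_fun_ge0 (x : V) (T : R) : 0 < T -> 0 <= g x T.
Proof.
move=> T_pos; have [x1 [t1 t1T t1min]] := li_yau_fun_min (n / 2) a x T T_pos.
apply: le_trans (t1min x T _); last by rewrite in_itv /= lexx ltW.
move: t1T; rewrite in_itv /= => /andP[]; rewrite le_eqVlt => /orP[/eqP <- _|t1_pos t1_le].
  by rewrite /li_yau_fun !mul0r mulr0 add0r addr0 mulr_ge0 ?divr_ge0 ?ltW ?u_pos.
exact: li_yau_fun_min_ge0 t1min.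
Qed.

End LiYau.
End HeatFlow.

Unset Implicit Arguments. Set Strict Implicit.
Theorem mainTheorem6 (R : realType) (V : finType) (adj : rel V)
  (w : V -> V -> R) (mu : V -> R) (psi : R -> R) (n K : R)
  (u : V -> R -> R) (s : R) :
  weighted_graph adj w mu ->
  0 < n -> 0 < K ->
  psi_admissible psi ->
  0 < s -> psi s = psi 1 * D_w adj w ->
  CD_psi adj w mu psi n (- K) ->
  heat_solution adj w mu u ->
  forall (x : V) (t : R), 0 < t ->
    Gamma_psi adj w mu psi (fun y => u y t) x
      - derive1 psi 1 * (derive1 (u x) t / u x t)
    <= n / (2 * t)
       + Num.sqrt (n * K * (D_mu adj w mu * (derive1 psi 1 * (s - 1) + psi 1))).
Proof.
move=> [_ _ _ w_pos mu_pos] n_pos K_pos [psi_d _ psi_pos dpsi_pos _] s_pos psi_s CD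
  [u_pos u_cont u_d _ u_heat] x t t_pos.
have := li_yau_fun_ge0 R V adj w mu psi u psi_d u_pos u_cont u_d u_heat n K s
  w_pos mu_pos psi_pos dpsi_pos n_pos K_pos s_pos psi_s CD x t t_pos.
have ux_pos := u_pos x t (ltW t_pos).
rewrite /li_yau_fun pmulr_rge0 // /lap_psi_heat => bracket_ge0.
rewrite Gamma_psi_lap ?gt_eqF // u_heat //.
set L := lap_psi adj w mu psi _ x in bracket_ge0 *.
set a := Num.sqrt _ in bracket_ge0 *.
suff : t * (- L) <= t * (n / (2 * t) + a) by rewrite ler_pM2l //; lra.
have -> : t * (n / (2 * t) + a) = n / 2 + a * t by field; rewrite gt_eqF.
lra.
Qed.
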